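(* Let $m \ge 2$ be an integer, let $n = 6m+1$, and let $G$ be the circulant graph on $n$ vertices with distance set $S = \{m\} \cup \{2m+1, 2m+2, \dots, 3m\}$; equivalently, vertices $u,v \in \mathbb{Z}/n\mathbb{Z}$ are adjacent if and only if $(u - v) \bmod n \in \{m, 5m+1\} \cup \{2m+1, \dots, 4m\}$. Then $G$ is a doubly saturated $R(4, m+2)$-good graph. More precisely: (1) $G$ contains no clique of size $4$; (2) $G$ contains no independent set of size $m+2$; (3) for every non-edge $\{u,v\}$ of $G$, the graph obtained by adding the edge $uv$ contains a clique of size $4$; (4) for every edge $\{u,v\}$ of $G$, the graph obtained by deleting the edge $uv$ contains an independent set of size $m+2$; and $G$ is neither complete nor edgeless.
   Context: For $x \in \mathbb{Z}/n\mathbb{Z}$, let $\|x\| := \min(x \bmod n,\; n - (x \bmod n))$. The circulant graph on $n$ vertices with distance set $S \subseteq \{1,\dots,\lfloor n/2\rfloor\}$ has vertex set $\mathbb{Z}/n\mathbb{Z}$, with $x$ and $y$ adjacent if and only if $\|x-y\| \in S$. A graph $G$ is \emph{$R(s,t)$-good} if it contains no clique of size $s$ and no independent set of size $t$. A graph $G$ is \emph{doubly saturated $R(s,t)$-good} if it is $R(s,t)$-good, adding any single missing edge yields a graph that is not $R(s,t)$-good, removing any single edge yields a graph that is not $R(s,t)$-good, and $G$ is neither complete nor edgeless. *)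

From mathcomp Require Import all_boot.
Set Implicit Arguments. Unset Strict Implicit. Unset Printing Implicit Defensive.

(* Simple graphs on a finite type T are given by a relation e : rel T,
   intended to be symmetric and irreflexive. *)

Definition is_clique (T : finType) (e : rel T) (A : {set T}) : bool :=
  [forall x in A, forall y in A, (x != y) ==> e x y].

Definition is_indep (T : finType) (e : rel T) (A : {set T}) : bool :=
  [forall x in A, forall y in A, (x != y) ==> ~~ e x y].

Definition has_clique (T : finType) (e : rel T) (s : nat) : Prop :=
  exists A : {set T}, #|A| = s /\ is_clique e A.

Definition has_indep (T : finType) (e : rel T) (t : nat) : Prop :=
  exists A : {set T}, #|A| = t /\ is_indep e A.

Definition Rgood (T : finType) (e : rel T) (s t : nat) : Prop :=
  ~ has_clique e s /\ ~ has_indep e t.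

Definition add_edge (T : finType) (e : rel T) (u v : T) : rel T :=
  fun x y => e x y || ((x == u) && (y == v)) || ((x == v) && (y == u)).

Definition del_edge (T : finType) (e : rel T) (u v : T) : rel T :=
  fun x y => e x y && ~~ (((x == u) && (y == v)) || ((x == v) && (y == u))).

Definition is_complete (T : finType) (e : rel T) : Prop :=
  forall x y : T, x != y -> e x y.

Definition is_edgeless (T : finType) (e : rel T) : Prop :=
  forall x y : T, ~~ e x y.

Definition doubly_saturated (T : finType) (e : rel T) (s t : nat) : Prop :=
  [/\ Rgood e s t,
      (forall u v : T, u != v -> ~~ e u v -> ~ Rgood (add_edge e u v) s t),
      (forall u v : T, e u v -> ~ Rgood (del_edge e u v) s t),
      ~ is_complete e
    & ~ is_edgeless e].

Definition circ_norm (n x : nat) : nat := minn (x %% n) (n - x %% n).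

Definition circulant (n : nat) (S : pred nat) : rel 'I_n :=
  fun x y => S (circ_norm n (x + n - y)).

Definition Sm (m : nat) : pred nat :=
  fun d => (d == m) || ((2 * m + 1 <= d) && (d <= 3 * m)).
Arguments circulant n S : clear implicits.

From mathcomp Require Import all_boot zify.
Set Implicit Arguments. Unset Strict Implicit. Unset Printing Implicit Defensive.

(* Adjacency of u and v depends only on d = (u - v) mod n: they are adjacent iff
   d lies in D = {m, 5m+1} U [2m+1, 4m], a set closed under d |-> n - d.
   A 4-clique a < b < c < d would have gaps g, h, k with g, h, k, g+h, h+k and
   g+h+k in D and g+h+k <= 6m; but two consecutive gaps are either m and a value
   in (2m, 3m], or two values above 2m summing to 5m+1, and no three gaps chain.
   Seen from z - 2m for a point z of an independent set I, every point of I lies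
   in [0, 4m], any two at distance at most 2m and never exactly m; pairing t with
   t + m leaves room for at most m+1 points.
   Rotations are automorphisms, so saturation only has to be checked on pairs
   {0, d}, with d <= 2m for non-edges and d <= 3m for edges up to swapping.
   Adding 0d creates the 4-clique {0, d, 3m, 4m} if d < m and {0, d, d+m, 5m+1}
   if d > m; deleting 0d makes an explicit set of m+2 points containing 0 and d
   independent, in each of the cases d = m, 2m < d < 3m and d = 3m. *)

Lemma eq_is_clique (T : finType) (r1 r2 : rel T) A :
  r1 =2 r2 -> is_clique r1 A = is_clique r2 A.
Proof.
by move=> r12; apply/eq_forallb => x; congr (_ ==> _); apply/eq_forallb => y; rewrite r12.
Qed.

Lemma has_indepE (T : finType) (r : rel T) k :
  has_indep r k = has_clique (fun x y => ~~ r x y) k.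
Proof. by []. Qed.

Lemma is_cliqueP (T : finType) (r : rel T) (A : {set T}) :
  reflect {in A &, forall x y, x != y -> r x y} (is_clique r A).
Proof.
apply: (iffP forall_inP) => [clA x y xA yA | clA x xA].
  by move/forall_inP/(_ y yA)/implyP: (clA x xA).
by apply/forall_inP => y yA; apply/implyP; apply: clA.
Qed.

Lemma has_clique_inj (T : finType) (r : rel T) k (f : 'I_k -> T) :
  injective f -> (forall i j, i != j -> r (f i) (f j)) -> has_clique r k.
Proof.
move=> f_inj f_clique; exists (f @: [set: 'I_k]); split.
  by rewrite card_imset // cardsT card_ord.
apply/is_cliqueP => _ _ /imsetP[i _ ->] /imsetP[j _ ->].
by rewrite (inj_eq f_inj); apply: f_clique.
Qed.

Lemma complete_has_clique N (r : rel 'I_N) k :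
  k <= N -> (forall x y, x != y -> r x y) -> has_clique r k.
Proof.
move=> le_kN r_complete.
have widen_inj : injective (widen_ord le_kN) by move=> i j [] /ord_inj.
by apply: (has_clique_inj widen_inj) => i j; rewrite -(inj_eq widen_inj); apply: r_complete.
Qed.

Lemma add_edgeC (T : finType) (e : rel T) u v : add_edge e u v =2 add_edge e v u.
Proof. by move=> x y; rewrite /add_edge -orbA (orbC ((x == u) && _)) orbA. Qed.

Lemma del_edgeC (T : finType) (e : rel T) u v : del_edge e u v =2 del_edge e v u.
Proof. by move=> x y; rewrite /del_edge orbC. Qed.

Lemma eq_has_clique (T : finType) (r1 r2 : rel T) k :
  r1 =2 r2 -> has_clique r1 k -> has_clique r2 k.
Proof. by move=> r12 [A [cardA clA]]; exists A; rewrite -(eq_is_clique A r12). Qed.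

Section CyclicDifference.
Variable n : nat.
Implicit Types (u v : 'I_n) (a b k x y z : nat).

Definition cdiff (x y : nat) := (x + n - y) %% n.

Lemma cdiffE x y : x < n -> y < n ->
  (y <= x /\ cdiff x y = x - y) \/ (x < y /\ cdiff x y = x + n - y).
Proof.
move=> ltxn ltyn; rewrite /cdiff; case: (leqP y x) => xy; [left | right]; split=> //.
  by rewrite -addnBAC // modnDr modn_small //; lia.
by rewrite modn_small //; lia.
Qed.

Lemma cdiff_ltn x y : x < n -> cdiff x y < n.
Proof. by move=> ltxn; rewrite ltn_pmod //; lia. Qed.

Lemma cdiff_trans x y z : x < n -> y < n -> z < n ->
  cdiff (cdiff x z) (cdiff y z) = cdiff x y.
Proof.
move=> ltxn ltyn ltzn; have := cdiffE ltxn ltzn; have := cdiffE ltyn ltzn.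
have := cdiffE ltxn ltyn; have := cdiffE (@cdiff_ltn x z ltxn) (@cdiff_ltn y z ltyn); lia.
Qed.

Lemma cdiff_sym x y : x < n -> y < n -> x != y -> cdiff y x = n - cdiff x y.
Proof. by move=> ltxn ltyn; have := cdiffE ltxn ltyn; have := cdiffE ltyn ltxn; lia. Qed.

Definition shift (u : 'I_n) k : 'I_n :=
  Ordinal (ltn_pmod (u + k) (leq_ltn_trans (leq0n u) (ltn_ord u))).

Lemma shiftE u k : k < n ->
  (u + k < n /\ shift u k = u + k :> nat) \/ (n <= u + k /\ shift u k = u + k - n :> nat).
Proof.
move=> ltkn /=; case: (ltnP (u + k) n) => ltukn; [left | right]; split=> //.
  by rewrite modn_small.
have ltun := ltn_ord u.
by rewrite -(subnK ltukn) modnDr modn_small //; lia.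
Qed.

Lemma cdiff_shiftl u k : k < n -> cdiff (shift u k) u = k.
Proof.
move=> ltkn; have ltun := ltn_ord u; have := cdiffE (ltn_ord (shift u k)) ltun.
have := shiftE u ltkn; lia.
Qed.

Lemma shift0 u : shift u 0 = u.
Proof. by apply: val_inj; rewrite /= addn0 modn_small. Qed.

Lemma shift_cdiff u v : shift u (cdiff v u) = v.
Proof.
apply: ord_inj; have ltdn := @cdiff_ltn v u (ltn_ord v).
have := cdiffE (ltn_ord v) (ltn_ord u); have := ltn_ord u; have := ltn_ord v.
by case: (shiftE u ltdn) => -[? ->]; lia.
Qed.

Lemma eq_shift u a b : a < n -> b < n -> (shift u a == shift u b) = (a == b).
Proof.
move=> ltan ltbn; apply/eqP/eqP => [eq_ab|-> //].
by rewrite -(cdiff_shiftl u ltan) eq_ab cdiff_shiftl.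
Qed.

Lemma cdiff_shift u a b : a < n -> b < n ->
  cdiff (shift u a) (shift u b) = cdiff a b.
Proof.
move=> ltan ltbn.
by rewrite -(cdiff_trans _ _ (ltn_ord u)) ?cdiff_shiftl.
Qed.

Lemma circulantE S u v : circulant n S u v = S (minn (cdiff u v) (n - cdiff u v)).
Proof. by []. Qed.

Lemma circulant_sym S : symmetric (circulant n S).
Proof.
move=> u v; rewrite !circulantE; have [-> // | neq_uv] := eqVneq u v.
rewrite (cdiff_sym (ltn_ord u) (ltn_ord v)) // subKn; first by rewrite minnC.
exact/ltnW/cdiff_ltn.
Qed.

Lemma has_clique_shifts (r : rel 'I_n) u (s : seq nat) :
  uniq s -> {in s, forall a, a < n} ->
  {in s &, forall a b, a != b -> r (shift u a) (shift u b)} ->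
  has_clique r (size s).
Proof.
move=> s_uniq s_lt s_clique.
have s_mem (i : 'I_(size s)) : nth 0 s i \in s by exact: mem_nth.
apply: (@has_clique_inj _ _ _ (fun i => shift u (nth 0 s i))) => [i j | i j neq_ij].
  by move/eqP; rewrite eq_shift ?s_lt // nth_uniq // => /eqP/ord_inj.
by apply: s_clique; rewrite ?s_mem // nth_uniq.
Qed.

End CyclicDifference.

Lemma card4_sorted N (A : {set 'I_N}) : #|A| = 4 ->
  exists a b c d : 'I_N, [/\ a \in A, b \in A, c \in A & d \in A] /\ [/\ a < b, b < c & c < d].
Proof.
move=> cardA; set s := sort (fun x y : 'I_N => x <= y) (enum A).
have : size s = 4 by rewrite size_sort -cardE.
have : uniq s by rewrite sort_uniq enum_uniq.
have : sorted (fun x y : 'I_N => x <= y) s by apply: sort_sorted => x y; apply: leq_total.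
have s_A x : x \in s -> x \in A by rewrite mem_sort mem_enum.
case: s s_A => [|a [|b [|c [|d []]]]] // s_A /and4P[ab bc cd _].
rewrite /= !inE -!val_eqE /= => s_uniq _.
exists a, b, c, d; split; first by split; apply: s_A; rewrite !inE eqxx ?orbT.
by split; lia.
Qed.

Lemma card_window_avoiding_diff (T : finType) (A : {set T}) (pos : T -> nat) w :
  {in A &, forall x y, x != y ->
     pos x != pos y /\ pos y <= pos x + 2 * w /\ pos y != pos x + w} ->
  #|A| <= w.+1.
Proof.
move=> posA; have [-> | [x1 x1A]] := set_0Vmem A; first by rewrite cards0.
have [x0 x0A x0_min] := arg_minnP pos x1A.
have window x : x \in A -> pos x0 <= pos x <= pos x0 + 2 * w.
  move=> xA; rewrite x0_min //=; have [-> | neq_x0x] := eqVneq x0 x; first lia.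
  by have [_ []] := posA _ _ x0A xA neq_x0x.
(* [t] and [t + w] share a class, [2w] is alone. *)
pose cls t := if t < w then t else if t < 2 * w then t - w else w.
have clsE t : t < w /\ cls t = t \/ w <= t < 2 * w /\ cls t = t - w \/
               2 * w <= t /\ cls t = w.
  by rewrite /cls; case: ltnP => ?; [|case: ltnP => ?]; lia.
have cls_lt t : cls t < w.+1 by have := clsE t; lia.
pose f x : 'I_w.+1 := Ordinal (cls_lt (pos x - pos x0)).
have f_inj : {in A &, injective f}.
  move=> x y xA yA [] eq_cls; apply/eqP; apply: contraT => neq_xy.
  have := posA _ _ xA yA neq_xy; have := posA _ _ yA xA; rewrite eq_sym => /(_ neq_xy).
  have := window x xA; have := window y yA.
  by move: eq_cls; case: (clsE (pos x - pos x0)); case: (clsE (pos y - pos x0)); lia.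
by rewrite -(card_in_imset f_inj) (leq_trans (max_card _)) ?card_ord.
Qed.

Section CirculantGraph.
Variable m : nat.
Hypothesis m_ge2 : 2 <= m.
Local Notation n := (6 * m + 1).
Local Notation G := (circulant n (Sm m)).
Implicit Types (u v x y : 'I_n) (a b d : nat).

Fact n_gt0 : 0 < n. Proof. by rewrite addn1. Qed.

Definition Dm d := [|| d == m, d == 5 * m + 1 | 2 * m + 1 <= d <= 4 * m].

Lemma adj_sym : symmetric G.
Proof. exact: circulant_sym. Qed.

Lemma adjE u v : G u v = Dm (cdiff n u v).
Proof. by rewrite circulantE /Sm /Dm; have := @cdiff_ltn n u v (ltn_ord u); lia. Qed.

Lemma adj_irrefl : irreflexive G.
Proof. by move=> u; rewrite adjE; have := cdiffE (ltn_ord u) (ltn_ord u); rewrite /Dm; lia. Qed.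

Lemma Dm_cdiffE a b : a < n -> b < n ->
  Dm (cdiff n a b) = (b <= a) && Dm (a - b) || (a < b) && Dm (a + n - b).
Proof. by move=> ltan ltbn; have := cdiffE ltan ltbn; rewrite /Dm; lia. Qed.

Lemma add_edge_shiftE u d a b : d < n -> a < n -> b < n ->
  add_edge G (shift u 0) (shift u d) (shift u a) (shift u b) =
  Dm (cdiff n a b) || (a == 0) && (b == d) || (a == d) && (b == 0).
Proof.
by move=> ltdn ltan ltbn; rewrite /add_edge adjE cdiff_shift // !eq_shift ?n_gt0.
Qed.

Lemma del_edge_shiftE u d a b : d < n -> a < n -> b < n ->
  del_edge G (shift u 0) (shift u d) (shift u a) (shift u b) =
  Dm (cdiff n a b) && ~~ ((a == 0) && (b == d) || (a == d) && (b == 0)).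
Proof.
by move=> ltdn ltan ltbn; rewrite /del_edge adjE cdiff_shift // !eq_shift ?n_gt0.
Qed.

Lemma Dm_gap_pair g h : Dm g -> Dm h -> Dm (g + h) -> g + h < n ->
  g = m /\ 2 * m < h <= 3 * m \/ h = m /\ 2 * m < g <= 3 * m \/
  2 * m < g /\ 2 * m < h /\ g + h = 5 * m + 1.
Proof. by rewrite /Dm; lia. Qed.

Lemma no_Dm_gap_triple g h k : Dm g -> Dm h -> Dm k -> Dm (g + h) -> Dm (h + k) ->
  Dm (g + h + k) -> g + h + k < n -> False.
Proof.
move=> Dg Dh Dk Dgh Dhk Dghk lt_ghkn.
have := Dm_gap_pair Dg Dh Dgh ltac:(lia); have := Dm_gap_pair Dh Dk Dhk ltac:(lia).
by move: Dghk; rewrite /Dm; lia.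
Qed.

Lemma no_K4 : ~ has_clique G 4.
Proof.
move=> [A [cardA /is_cliqueP clA]].
have [a [b [c [d [[aA bA cA dA] [ab bc cd]]]]]] := card4_sorted cardA.
have gap x y : x \in A -> y \in A -> x < y -> Dm (y - x).
  move=> xA yA lt_xy; have neq_yx : y != x by rewrite -val_eqE /= gtn_eqF.
  have := cdiffE (ltn_ord y) (ltn_ord x); move: (clA y x yA xA neq_yx).
  by rewrite adjE /Dm; lia.
have ltdn := ltn_ord d.
have e_ac : b - a + (c - b) = c - a by lia.
have e_bd : c - b + (d - c) = d - b by lia.
have e_ad : b - a + (c - b) + (d - c) = d - a by lia.
apply: (@no_Dm_gap_triple (b - a) (c - b) (d - c)); rewrite ?e_ad ?e_ac ?e_bd;
  by [apply: gap => //; lia | lia].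
Qed.

Lemma no_indep : ~ has_indep G (m + 2).
Proof.
move=> [I [cardI /is_cliqueP indI]].
have [z zI] : exists z, z \in I by apply/card_gt0P; rewrite cardI addn2.
(* [w] is [z - 2m], so that every point of [I] gets a position in [[0, 4m]]. *)
pose w := shift z (4 * m + 1); pose pos x := cdiff n (x : 'I_n) w.
have pos_lt x : pos x < n := cdiff_ltn w (ltn_ord x).
have pos_inj x y : pos x = pos y -> x = y.
  by move=> eq_pos; rewrite -(shift_cdiff w x) -(shift_cdiff w y) -/(pos x) eq_pos.
have pos_z : pos z = 2 * m.
  have neq_wz : w != z by rewrite -[X in _ != X](shift0 z) eq_shift ?n_gt0 //; lia.
  rewrite /pos (cdiff_sym (ltn_ord w)) // cdiff_shiftl; lia.
have nonadj x y : x \in I -> y \in I -> ~~ Dm (cdiff n (pos x) (pos y)).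
  move=> xI yI; rewrite /pos cdiff_trans // -adjE.
  by have [-> | ] := eqVneq x y; [rewrite adj_irrefl | exact: indI].
suff : #|I| <= m.+1 by rewrite cardI; lia.
have window x : x \in I -> pos x <= 4 * m.
  move=> xI; have := nonadj x z xI zI; have := cdiffE (pos_lt x) (pos_lt z).
  by have := pos_lt x; rewrite pos_z /Dm; lia.
apply: (card_window_avoiding_diff (pos := pos)) => x y xI yI neq_xy.
have neq_pos : pos x != pos y by apply: contra neq_xy => /eqP/pos_inj ->.
have := nonadj x y xI yI; have := cdiffE (pos_lt x) (pos_lt y).
by have := window x xI; have := window y yI; rewrite /Dm; lia.
Qed.

Lemma add_edge_shift_clique u d : 1 <= d <= 2 * m -> d != m ->
  has_clique (add_edge G (shift u 0) (shift u d)) 4.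
Proof.
move=> d_range neq_dm.
have [lt_dm | lt_md] := ltnP d m;
  [apply: (@has_clique_shifts n _ u [:: 0; d; 3 * m; 4 * m]) => [|a|a b] |
   apply: (@has_clique_shifts n _ u [:: 0; d; d + m; 5 * m + 1]) => [|a|a b]];
  rewrite /= ?inE; try lia;
  move=> /or4P[] /eqP-> /or4P[] /eqP-> neq_ab;
  rewrite add_edge_shiftE ?Dm_cdiffE /Dm; lia.
Qed.

Lemma del_edge_shift_indep u d : Dm d -> d <= 3 * m ->
  has_indep (del_edge G (shift u 0) (shift u d)) (m + 2).
Proof.
move=> Dd le_d3m; rewrite has_indepE.
have ltdn : d < n by lia.
have offsets s : uniq s -> {in s, forall a, a < n} ->
    {in s &, forall a b, a != b ->
       [|| ~~ Dm (cdiff n a b), (a == 0) && (b == d) | (a == d) && (b == 0)]} ->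
    size s = m + 2 -> has_clique (fun x y => ~~ del_edge G (shift u 0) (shift u d) x y) (m + 2).
  move=> s_uniq s_lt s_indep <-.
  apply: (has_clique_shifts (u := u)) => // a b a_s b_s neq_ab.
  rewrite del_edge_shiftE ?(s_lt a, s_lt b) // negb_and negbK.
  exact: s_indep.
have [eq_dm | neq_dm] := eqVneq d m.
  apply: (offsets ([:: 0; d; 6 * m; 2 * m - 1] ++ iota 1 (m - 2))).
  - rewrite cat_uniq iota_uniq andbT; apply/andP; split; first by rewrite /= !inE; lia.
    by apply/hasPn => a; rewrite mem_iota !inE; lia.
  - by move=> a; rewrite mem_cat mem_iota !inE; lia.
  - move=> a b; rewrite !mem_cat !mem_iota !inE => a_s b_s neq_ab.
    rewrite Dm_cdiffE /Dm; lia.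
  - by rewrite size_cat size_iota /=; lia.
have gt_d2m : 2 * m < d by move: Dd neq_dm; rewrite /Dm; lia.
have [lt_d3m | ge_d3m] := ltnP d (3 * m).
  apply: (offsets ([:: 0; d; 2 * m] ++ iota (d - 2 * m) (3 * m - d) ++
                   iota (m + 1) (d - 2 * m - 1))).
  - rewrite !cat_uniq !iota_uniq !andbT; apply/and3P; split.
    + by rewrite /= !inE; lia.
    + by apply/hasPn => a; rewrite mem_cat !mem_iota !inE; lia.
    + by apply/hasPn => a; rewrite !mem_iota; lia.
  - by move=> a; rewrite !mem_cat !mem_iota !inE; lia.
  - move=> a b; rewrite !mem_cat !mem_iota !inE => a_s b_s neq_ab.
    by rewrite Dm_cdiffE /Dm; lia.
  - by rewrite !size_cat !size_iota /=; lia.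
apply: (offsets ([:: 0; d] ++ iota (4 * m + 1) m)).
- rewrite cat_uniq iota_uniq andbT; apply/andP; split; first by rewrite /= !inE; lia.
  by apply/hasPn => a; rewrite mem_iota !inE; lia.
- by move=> a; rewrite mem_cat mem_iota !inE; lia.
- move=> a b; rewrite !mem_cat !mem_iota !inE => a_s b_s neq_ab.
  by rewrite Dm_cdiffE /Dm; lia.
- by rewrite size_cat size_iota /=; lia.
Qed.

Lemma add_edge_clique u v : u != v -> ~~ G u v -> has_clique (add_edge G u v) 4.
Proof.
wlog le_d2m : u v / cdiff n v u <= 2 * m.
  move=> wlog_uv neq_uv nadj_uv.
  have [le_d2m | gt_d2m] := leqP (cdiff n v u) (2 * m); first exact: wlog_uv.
  have neq_vu : v != u by rewrite eq_sym.
  apply: (eq_has_clique (add_edgeC G v u)); apply: wlog_uv => //; last by rewrite adj_sym.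
  move: nadj_uv; rewrite adj_sym adjE (cdiff_sym (ltn_ord v) (ltn_ord u) neq_vu) /Dm; lia.
move=> neq_uv nadj_uv; have := cdiffE (ltn_ord v) (ltn_ord u).
move: neq_uv nadj_uv; rewrite -val_eqE adj_sym adjE /Dm /= => neq_uv nadj_uv cdiff_vu.
have := @add_edge_shift_clique u (cdiff n v u); rewrite shift0 shift_cdiff.
by apply; have := ltn_ord u; lia.
Qed.

Lemma del_edge_indep u v : G u v -> has_indep (del_edge G u v) (m + 2).
Proof.
wlog le_d3m : u v / cdiff n v u <= 3 * m.
  move=> wlog_uv adj_uv.
  have [le_d3m | gt_d3m] := leqP (cdiff n v u) (3 * m); first exact: wlog_uv.
  rewrite has_indepE; apply: (eq_has_clique (fun x y => congr1 negb (del_edgeC G v u x y))).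
  rewrite -has_indepE; apply: wlog_uv; last by rewrite adj_sym.
  have neq_vu : v != u by apply: contraTneq adj_uv => ->; rewrite adj_irrefl.
  move: adj_uv; rewrite adj_sym adjE (cdiff_sym (ltn_ord v) (ltn_ord u) neq_vu) /Dm; lia.
move=> adj_uv.
have := @del_edge_shift_indep u (cdiff n v u); rewrite shift0 shift_cdiff; apply => //.
by rewrite -adjE adj_sym.
Qed.

End CirculantGraph.

Theorem mainTheorem2 (m : nat) (hm : 2 <= m) :
  let n := 6 * m + 1 in
  let G := circulant n (Sm m) in
  doubly_saturated G 4 (m + 2)
  /\ (forall u v : 'I_n, u != v -> ~~ G u v -> has_clique (add_edge G u v) 4)
  /\ (forall u v : 'I_n, G u v -> has_indep (del_edge G u v) (m + 2)).
Proof.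
move=> n G; rewrite {}/G {}/n.
have add_clique := add_edge_clique hm; have del_indep := del_edge_indep hm.
split; last by split.
split.
- by split; [exact: no_K4 | exact: no_indep].
- by move=> u v neq_uv nadj_uv [noK4 _]; apply/noK4/add_clique.
- by move=> u v adj_uv [_ no_indep]; apply/no_indep/del_indep.
- move=> complete; apply: (no_K4 hm).
  by apply: complete_has_clique => [|x y /complete //]; lia.
- move=> edgeless; apply: (no_indep hm); rewrite has_indepE.
  by apply: complete_has_clique => [|x y _]; [lia | apply: edgeless].
Qed.
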